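(* Let $(f_0,\dots,f_4)$ be a rational solution of $A_4(\alpha_0,\dots,\alpha_4)$ some of whose components have a pole at $t=\infty$ (indices modulo 5). (1) If for some $i$, $f_i$ has a pole at $t=\infty$ and $f_{i+1},f_{i+2},f_{i+3},f_{i+4}$ are regular there; or (2) if for some $i$, $f_i,f_{i+1},f_{i+3}$ have a pole at $t=\infty$ and $f_{i+2},f_{i+4}$ are regular there; or (3) if for some $i$, $f_i,f_{i+1},f_{i+2}$ have a pole at $t=\infty$ and $f_{i+3},f_{i+4}$ are regular there; or (4) if all of $f_0,\dots,f_4$ have a pole at $t=\infty$, then the Laurent series of $f_0,\dots,f_4$ at $t=\infty$ are uniquely determined (by the parameters and the case, with its index $i$). Moreover: in case (1), for each $k\in\{1,2,3,4\}$, $f_{i+k}\equiv0$ if $\alpha_{i+k}=0$; in case (2), $f_{i+2}\equiv0$ if $\alpha_{i+2}=0$ and $f_{i+4}\equiv0$ if $\alpha_{i+4}=0$; in case (3), $f_{i+3}\equiv0$ if $\alpha_{i+3}=0$ and $f_{i+4}\equiv0$ if $\alpha_{i+4}=0$.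
   Context: The $A_4^{(1)}$ Painlevé equation $A_4(\alpha_0,\dots,\alpha_4)$ with complex parameters $\alpha_j$ is the system for five functions $f_0,\dots,f_4$ of $t$ (indices in $\mathbb{Z}/5\mathbb{Z}$, ${}'=d/dt$): $f_j'=f_j(f_{j+1}-f_{j+2}+f_{j+3}-f_{j+4})+\alpha_j$ ($j=0,\dots,4$), $f_0+\dots+f_4=t$; hence $\sum_j\alpha_j=1$. A rational solution is a tuple of rational functions of $t$ satisfying it. *)

From HB Require Import structures.
From mathcomp Require Import all_boot all_order all_algebra.
From mathcomp Require Import generic_quotient fraction.
From mathcomp Require Import reals.
From mathcomp Require Import complex.

Set Implicit Arguments.
Unset Strict Implicit.
Unset Printing Implicit Defensive.

Import Order.TTheory GRing.Theory Num.Theory.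
Local Open Scope ring_scope.

(* Complex numbers: C := R[i] for R : realType (any realType is iso to the
   reals, so R[i] is the field of complex numbers). *)

(* Rational functions of t with complex coefficients: the fraction field of
   C[t].  The variable t is 'X. *)
Notation ratfun R := {fraction {poly (R[i])}}.
Notation "x %:F" := (@FracField.tofrac _ x) : ring_scope.

Section RatFun.
Variable R : realType.
Local Notation C := (R[i]).
Local Notation F := (ratfun R).

Definition rnum (f : F) : {poly C} := \n_(repr f).
Definition rden (f : F) : {poly C} := \d_(repr f).

(* derivative d/dt of a rational function (quotient rule; independent of
   the chosen representative) *)
Definition rderiv (f : F) : F :=
  (((rnum f)^`() * rden f - rnum f * (rden f)^`())%:F) / ((rden f ^+ 2)%:F).

Definition pole_at_infty (f : F) : bool := (size (rden f) < size (rnum f))%N.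
Definition regular_at_infty (f : F) : bool := ~~ pole_at_infty f.

(* Laurent series of f at t = infinity, as the coefficient function
   n |-> coefficient of t^n  (n : int).  For n >= 0 it is the n-th coefficient
   of the polynomial part p %/ q; for n = -(k+1) it is the constant coefficient
   of the polynomial part of t^(k+1) f. *)
Definition laurent_infty (f : F) (n : int) : C :=
  match n with
  | Posz k => (rnum f %/ rden f)`_k
  | Negz k => (('X^(k.+1) * rnum f) %/ rden f)`_0
  end.

Definition sh (i : 'I_5) (k : nat) : 'I_5 := inZp (i + k).

Definition A4_solution (alpha : 'I_5 -> C) (f : 'I_5 -> F) : Prop :=
  (forall j : 'I_5,
      rderiv (f j) = f j * (f (sh j 1) - f (sh j 2) + f (sh j 3) - f (sh j 4))
                     + ((alpha j)%:P)%:F)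
  /\ \sum_(j < 5) f j = ('X)%:F.

Definition case1 (i : 'I_5) (f : 'I_5 -> F) : bool :=
  [&& pole_at_infty (f i), regular_at_infty (f (sh i 1)),
      regular_at_infty (f (sh i 2)), regular_at_infty (f (sh i 3))
    & regular_at_infty (f (sh i 4))].

Definition case2 (i : 'I_5) (f : 'I_5 -> F) : bool :=
  [&& pole_at_infty (f i), pole_at_infty (f (sh i 1)),
      pole_at_infty (f (sh i 3)), regular_at_infty (f (sh i 2))
    & regular_at_infty (f (sh i 4))].

Definition case3 (i : 'I_5) (f : 'I_5 -> F) : bool :=
  [&& pole_at_infty (f i), pole_at_infty (f (sh i 1)),
      pole_at_infty (f (sh i 2)), regular_at_infty (f (sh i 3))
    & regular_at_infty (f (sh i 4))].

Definition case4 (f : 'I_5 -> F) : bool := [forall j, pole_at_infty (f j)].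

(* case number c in {1,2,3,4} with index i (ignored for c = 4) *)
Definition in_case (c : nat) (i : 'I_5) (f : 'I_5 -> F) : bool :=
  match c with
  | 1 => case1 i f
  | 2 => case2 i f
  | 3 => case3 i f
  | 4 => case4 f
  | _ => false
  end%N.

End RatFun.

(* Say that f = p/q has degree at most m at t = oo when deg p - deg q <= m,
   i.e. f = O(t^m).  If f_j has a pole there, its equation f_j' = f_j S_j + alpha_j, with
   S_j = f_(j+1) - f_(j+2) + f_(j+3) - f_(j+4), forces S_j = O(1/t); together with
   f_0 + ... + f_4 = t this gives, at every regular index j of the case,
   c_j S_j = t + O(1) for an integer c_j.
   For two solutions f, g the differences d_j = f_j - g_j satisfy
   d_j' = d_j S_j(f) + g_j S_j(d).  At a regular index,
   t d_j = c_j (d_j' - g_j S_j(d)) - d_j (c_j S_j - t) lowers a common degree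
   bound of the d's by one; at a pole index the same equation lowers the bound of
   S_j(d), and the remaining d_j are linear combinations of these and of
   sum_j d_j = 0.  The bound therefore descends forever and f = g: the solution
   itself, not only its Laurent series, is unique.  Taking g_j = 0 and
   alpha_j = 0 at a regular index gives f_j = 0 in the same way. *)

From HB Require Import structures.
From mathcomp Require Import all_boot all_order all_algebra.
From mathcomp Require Import generic_quotient fraction.
From mathcomp Require Import reals complex.
From mathcomp Require Import ring zify.
Import Order.TTheory GRing.Theory Num.Theory.
Local Open Scope ring_scope.
Local Open Scope quotient_scope.
Set Implicit Arguments.
Unset Strict Implicit.

Lemma tofrac_repr (K : idomainType) (f : {fraction K}) :
  f * (\d_(repr f))%:F = (\n_(repr f))%:F.
Proof.
suff H (x : {ratio K}) : \pi_{fraction K} x * (\d_x)%:F = (\n_x)%:F.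
  by rewrite -{1}[f]reprK H.
rewrite !piE; apply/eqmodP; rewrite /= FracField.equivfE.
rewrite /FracField.mulf !numden_Ratio ?mulf_neq0 ?denom_ratioP ?oner_neq0 //.
by rewrite !mulr1 mulrC.
Qed.

Lemma fraction_numden (K : idomainType) (f : {fraction K}) :
  exists p q : K, q != 0 /\ f = p%:F / q%:F.
Proof.
exists (\n_(repr f)), (\d_(repr f)); split; first exact: denom_ratioP.
by rewrite -tofrac_repr mulfK // tofrac_eq0 denom_ratioP.
Qed.

Lemma tofrac_div_inj (K : idomainType) (p q p' q' : K) : q != 0 -> q' != 0 ->
  p%:F / q%:F = p'%:F / q'%:F :> {fraction K} -> p * q' = p' * q.
Proof.
move=> q0 q'0 /eqP; rewrite eqr_div ?tofrac_eq0 // -!tofracM tofrac_eq.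
by move/eqP.
Qed.

Lemma subf_div (K : fieldType) (u v w z : K) : v != 0 -> z != 0 ->
  u / v - w / z = (u * z - w * v) / (v * z).
Proof. by move=> v0 z0; rewrite -mulNr addf_div // mulNr. Qed.

Lemma int_descent (P : int -> Prop) (m : int) :
  P m -> (forall k, P k -> P (k - 1)) -> forall n : nat, P (m - n%:Z).
Proof.
move=> Pm step; elim=> [|n IH]; first by rewrite subr0.
have -> : m - n.+1%:Z = m - n%:Z - 1 by lia.
exact: step.
Qed.

Section DegreeAtInfinity.
Variable K : idomainType.
Local Notation F := {fraction {poly K}}.

Definition deg_le (m : int) (f : F) : Prop :=
  exists p q : {poly K}, [/\ q != 0, f = p%:F / q%:F & (size p)%:Z <= (size q)%:Z + m].

Lemma deg_le_frac (p q : {poly K}) :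
  q != 0 -> deg_le ((size p)%:Z - (size q)%:Z) (p%:F / q%:F).
Proof. by move=> q0; exists p, q; split => //; lia. Qed.

Lemma deg_le_size (m : int) (p q : {poly K}) : q != 0 -> p != 0 ->
  deg_le m (p%:F / q%:F) -> (size p)%:Z <= (size q)%:Z + m.
Proof.
move=> q0 p0 [p1 [q1 [q10 /(tofrac_div_inj q0 q10) E le1]]].
have p10 : p1 != 0.
  by apply: contra_eq_neq E => ->; rewrite mul0r mulf_neq0.
have := congr1 (fun r : {poly K} => size r) E; rewrite /= !size_mul // -!subn1.
have := size_poly_gt0 p; have := size_poly_gt0 p1; rewrite p0 p10 /=.
move: le1; move: (size p) (size q) (size p1) (size q1) => a b c d; lia.
Qed.

Lemma deg_le0 (m : int) : deg_le m 0.
Proof.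
exists 0, 'X^`|m|; split; first by rewrite -size_poly_gt0 size_polyXn.
  by rewrite tofrac0 mul0r.
by rewrite size_poly0 size_polyXn; lia.
Qed.

Lemma deg_leW (m n : int) (f : F) : m <= n -> deg_le m f -> deg_le n f.
Proof. by move=> mn [p [q [q0 e le]]]; exists p, q; split => //; lia. Qed.

Lemma deg_leD (m : int) (f g : F) : deg_le m f -> deg_le m g -> deg_le m (f + g).
Proof.
move=> [p1 [q1 [q10 -> le1]]] [p2 [q2 [q20 -> le2]]].
exists (p1 * q2 + p2 * q1), (q1 * q2); split; first by rewrite mulf_neq0.
  by rewrite addf_div ?tofrac_eq0 // tofracD !tofracM.
rewrite (size_mul q10 q20).
have := size_polyD (p1 * q2) (p2 * q1); rewrite leq_max.
have := size_polyMleq p1 q2; have := size_polyMleq p2 q1.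
have := size_poly_gt0 q1; have := size_poly_gt0 q2; rewrite q10 q20 /=.
move: le1 le2; move: (size p1) (size p2) (size q1) (size q2) => a1 a2 b1 b2.
move: (size _) (size _) (size _) => c c1 c2; rewrite -!subn1; lia.
Qed.

Lemma deg_leN (m : int) (f : F) : deg_le m f -> deg_le m (- f).
Proof.
move=> [p [q [q0 -> le]]]; exists (- p), q; split => //.
  by rewrite tofracN mulNr.
by rewrite size_polyN.
Qed.

Lemma deg_leB (m : int) (f g : F) : deg_le m f -> deg_le m g -> deg_le m (f - g).
Proof. by move=> hf hg; apply/deg_leD/deg_leN. Qed.

Lemma deg_leM (m n : int) (f g : F) :
  deg_le m f -> deg_le n g -> deg_le (m + n) (f * g).
Proof.
move=> [p1 [q1 [q10 -> le1]]] [p2 [q2 [q20 -> le2]]].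
have [->|p10] := eqVneq p1 0; first by rewrite tofrac0 !mul0r; apply: deg_le0.
have [->|p20] := eqVneq p2 0; first by rewrite tofrac0 mul0r mulr0; apply: deg_le0.
exists (p1 * p2), (q1 * q2); split; first by rewrite mulf_neq0.
  by rewrite mulf_div -!tofracM.
rewrite (size_mul p10 p20) (size_mul q10 q20).
have := size_poly_gt0 p1; have := size_poly_gt0 p2.
have := size_poly_gt0 q1; have := size_poly_gt0 q2; rewrite p10 p20 q10 q20 /=.
move: le1 le2; move: (size p1) (size p2) (size q1) (size q2) => a1 a2 b1 b2.
rewrite -!subn1; lia.
Qed.

Lemma deg_leC (c : K) : deg_le 0 (c%:P)%:F.
Proof.
exists c%:P, 1; split; rewrite ?oner_neq0 ?tofrac1 ?divr1 //.
by rewrite size_polyC size_poly1; case: (c != 0) => /=.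
Qed.

Lemma natr_tofracC (n : nat) : (n%:R : F) = ((n%:R : K)%:P)%:F.
Proof. by rewrite !rmorph_nat. Qed.

Lemma deg_le_nat (n : nat) : deg_le 0 (n%:R : F).
Proof. by rewrite natr_tofracC; apply: deg_leC. Qed.

Lemma deg_le1 : deg_le 0 (1 : F).
Proof. exact: deg_le_nat 1. Qed.

Lemma deg_leMn (m : int) (n : nat) (f : F) : deg_le m f -> deg_le m (n%:R * f).
Proof. by move=> h; rewrite -[m]add0r; apply/deg_leM/h/deg_le_nat. Qed.

Lemma deg_le_divl (m : int) (p q : {poly K}) (f : F) : p != 0 -> q != 0 ->
  deg_le m (p%:F / q%:F * f) -> deg_le (m - ((size p)%:Z - (size q)%:Z)) f.
Proof.
move=> p0 q0 h; have pq0 : p%:F / q%:F != 0 :> F.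
  by rewrite mulf_neq0 ?invr_eq0 ?tofrac_eq0.
rewrite -[f](mulKf pq0) invf_div.
by rewrite addrC; apply: deg_leM h; rewrite opprB; apply: deg_le_frac.
Qed.

Lemma deg_le_mulXl (m : int) (f : F) : deg_le m ('X%:F * f) -> deg_le (m - 1) f.
Proof.
rewrite -[_%:F]divr1 -tofrac1 => /deg_le_divl.
by rewrite size_polyX size_poly1; apply; rewrite ?polyX_eq0 ?oner_neq0.
Qed.

Lemma deg_le_natmulK (m : int) (n : nat) (f : F) : n%:R != 0 :> K ->
  deg_le m (n%:R * f) -> deg_le m f.
Proof.
move=> n0; rewrite natr_tofracC -[_%:F]divr1 -tofrac1.
move=> /deg_le_divl; rewrite size_polyC n0 size_poly1 subrr subr0.
by apply; rewrite ?polyC_eq0 ?oner_neq0.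
Qed.

Lemma deg_le_ub (n : int) (f : F) : exists2 m, n <= m & deg_le m f.
Proof.
have [p [q [q0 ->]]] := fraction_numden f.
exists (Num.max n ((size p)%:Z - (size q)%:Z)); first by rewrite le_max lexx.
by apply: deg_leW (deg_le_frac _ q0); rewrite le_max lexx orbT.
Qed.

Lemma deg_le_eq0 (m : int) (f : F) : (forall n : nat, deg_le (m - n%:Z) f) -> f = 0.
Proof.
have [p [q [q0 ->]]] := fraction_numden f.
move=> h; have [->|p0] := eqVneq p 0; first by rewrite tofrac0 mul0r.
have := deg_le_size q0 p0 (h (size q + `|m|)%N).
have := size_poly_gt0 p; rewrite p0 /=.
move: (size p) (size q) => a b; lia.
Qed.

Lemma deg_le_deriv (m : int) (p q : {poly K}) : q != 0 -> deg_le m (p%:F / q%:F) ->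
  deg_le (m - 1) ((p^`() * q - p * q^`())%:F / (q ^+ 2)%:F).
Proof.
move=> q0 h; have q20 : q ^+ 2 != 0 by rewrite expf_neq0.
have [->|p0] := eqVneq p 0; first by rewrite deriv0 !mul0r subr0 tofrac0 mul0r; apply: deg_le0.
have le := deg_le_size q0 p0 h.
exists (p^`() * q - p * q^`()), (q ^+ 2); split => //.
have := size_polyD (p^`() * q) (- (p * q^`())); rewrite size_polyN leq_max.
have := size_polyMleq p^`() q; have := size_polyMleq p q^`().
have := lt_size_deriv p0; have := lt_size_deriv q0.
have := size_poly_gt0 p; have := size_poly_gt0 q; rewrite p0 q0 expr2 (size_mul q0 q0) /=.
move: le; move: (size p) (size q) (size p^`()) (size q^`()) => a b c d.
move: (size _) (size _) (size _) => e e1 e2; rewrite -!subn1; lia.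
Qed.

Lemma deg_le_descent5 (x0 x1 x2 x3 x4 : F) :
  (forall m, [/\ deg_le m x0, deg_le m x1, deg_le m x2, deg_le m x3 & deg_le m x4] ->
     [/\ deg_le (m - 1) x0, deg_le (m - 1) x1, deg_le (m - 1) x2,
         deg_le (m - 1) x3 & deg_le (m - 1) x4]) ->
  [/\ x0 = 0, x1 = 0, x2 = 0, x3 = 0 & x4 = 0].
Proof.
move=> step.
have [m0 _ h0] := deg_le_ub 0 x0; have [m1 le01 h1] := deg_le_ub m0 x1.
have [m2 le12 h2] := deg_le_ub m1 x2; have [m3 le23 h3] := deg_le_ub m2 x3.
have [m4 le34 h4] := deg_le_ub m3 x4.
have base : [/\ deg_le m4 x0, deg_le m4 x1, deg_le m4 x2, deg_le m4 x3 & deg_le m4 x4].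
  by split; [apply: deg_leW h0 | apply: deg_leW h1 | apply: deg_leW h2
    | apply: deg_leW h3 | apply: deg_leW h4]; lia.
have all_n := int_descent base step.
by split; apply: (deg_le_eq0 (m := m4)) => n; case: (all_n n).
Qed.

End DegreeAtInfinity.

Section RationalFunctions.
Variable R : realType.
Local Notation F := (ratfun R).

Lemma rden_neq0 (f : F) : rden f != 0.
Proof. exact: denom_ratioP. Qed.

Lemma ratfunE (f : F) : f = (rnum f)%:F / (rden f)%:F.
Proof. by rewrite -tofrac_repr mulfK // tofrac_eq0 rden_neq0. Qed.

Definition deg_infty (f : F) : int := (size (rnum f))%:Z - (size (rden f))%:Z.

Lemma deg_le_deg_infty (f : F) : deg_le (deg_infty f) f.
Proof. by rewrite {2}[f]ratfunE; apply/deg_le_frac/rden_neq0. Qed.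

Lemma deg_le_regular (f : F) : regular_at_infty f -> deg_le 0 f.
Proof.
rewrite /regular_at_infty /pole_at_infty -leqNgt => le.
by apply: deg_leW (deg_le_deg_infty f); rewrite /deg_infty; lia.
Qed.

Lemma pole_deg_infty_gt0 (f : F) : pole_at_infty f -> 0 < deg_infty f.
Proof. by rewrite /pole_at_infty /deg_infty; lia. Qed.

Lemma deg_le_pole_divl (m : int) (f S : F) :
  pole_at_infty f -> deg_le (m + deg_infty f) (f * S) -> deg_le m S.
Proof.
move=> pf; have n0 : rnum f != 0.
  by rewrite -size_poly_gt0; move: pf; rewrite /pole_at_infty; lia.
by rewrite [f in f * S]ratfunE => /(deg_le_divl n0 (rden_neq0 f)); rewrite addrK.
Qed.

Lemma deg_le_rderiv (m : int) (f : F) : deg_le m f -> deg_le (m - 1) (rderiv f).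
Proof. by rewrite {1}[f]ratfunE; apply/deg_le_deriv/rden_neq0. Qed.

Lemma rderiv_frac (p q : {poly R[i]}) : q != 0 ->
  rderiv (p%:F / q%:F) = (p^`() * q - p * q^`())%:F / (q ^+ 2)%:F.
Proof.
move=> q0; rewrite /rderiv; set f : F := p%:F / q%:F.
have := tofrac_div_inj q0 (rden_neq0 f) (ratfunE f).
move: (rnum f) (rden f) (rden_neq0 f) => a b b0 E.
have E' : p^`() * b + p * b^`() = a^`() * q + a * q^`() by rewrite -!derivM E.
apply/eqP; rewrite eqr_div ?tofrac_eq0 ?expf_neq0 // -!tofracM tofrac_eq -subr_eq0.
apply/eqP; transitivity (q * b * (a^`() * q + a * q^`() - (p^`() * b + p * b^`()))
   + (q^`() * b + q * b^`()) * (p * b - a * q)); first ring.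
by rewrite E' E !subrr !mulr0 addr0.
Qed.

Lemma rderivB (f g : F) : rderiv (f - g) = rderiv f - rderiv g.
Proof.
have fgE : f - g = (rnum f * rden g - rnum g * rden f)%:F / (rden f * rden g)%:F.
  rewrite {1}[f]ratfunE {1}[g]ratfunE -mulNr addf_div ?tofrac_eq0 ?rden_neq0 //.
  by rewrite tofracB !tofracM mulNr.
rewrite fgE rderiv_frac ?mulf_neq0 ?rden_neq0 // /rderiv.
move: (rnum f) (rden f) (rden_neq0 f) (rnum g) (rden g) (rden_neq0 g) => a b b0 c d d0.
have bF : (b ^+ 2)%:F != 0 :> F by rewrite tofrac_eq0 expf_neq0.
have dF : (d ^+ 2)%:F != 0 :> F by rewrite tofrac_eq0 expf_neq0.
have bdF : ((b * d) ^+ 2)%:F != 0 :> F by rewrite tofrac_eq0 expf_neq0 ?mulf_neq0.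
rewrite (subf_div _ _ bF dF); apply/eqP; rewrite (eqr_div _ _ bdF (mulf_neq0 bF dF)).
rewrite -!tofracM -tofracB -tofracM tofrac_eq.
by rewrite !derivD !derivN !derivM; apply/eqP; ring.
Qed.

Lemma pole_deg_le_coef (f S A : F) :
  pole_at_infty f -> rderiv f = f * S + A -> deg_le 0 A -> deg_le (-1) S.
Proof.
move=> pf e hA; have gt0 := pole_deg_infty_gt0 pf; apply: (deg_le_pole_divl pf).
have -> : f * S = rderiv f - A by rewrite e addrK.
apply: deg_leB; first by apply: deg_leW (deg_le_rderiv (deg_le_deg_infty f)); lia.
by apply: deg_leW hA; lia.
Qed.

Lemma deg_le_pole_step (m : int) (d S g D : F) :
  rderiv d = d * S + g * D -> deg_le m d -> deg_le (-1) S -> pole_at_infty g ->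
  deg_le (m - 1) D.
Proof.
move=> e hd hS pg; have gt0 := pole_deg_infty_gt0 pg; apply: (deg_le_pole_divl pg).
have -> : g * D = rderiv d - d * S by rewrite e addrAC subrr add0r.
apply: deg_leB; first by apply: deg_leW (deg_le_rderiv hd); lia.
by apply: deg_leW (deg_leM hd hS); lia.
Qed.

Definition dominates_t (S : F) : Prop :=
  exists2 c : F, deg_le 0 c & deg_le 0 (c * S - 'X%:F).

Lemma deg_le_regular_step (m : int) (d S g D : F) :
  rderiv d = d * S + g * D -> deg_le m d -> deg_le m D -> deg_le 0 g ->
  dominates_t S -> deg_le (m - 1) d.
Proof.
move=> e hd hD hg [c hc hcS]; apply: deg_le_mulXl.
have -> : 'X%:F * d = c * (rderiv d - g * D) - d * (c * S - 'X%:F) by rewrite e; ring.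
apply: deg_leB; last by rewrite -[m]addr0; apply: deg_leM.
rewrite -[m]add0r; apply: deg_leM hc _; apply: deg_leB.
  by apply: deg_leW (deg_le_rderiv hd); lia.
by rewrite -[m]add0r; apply: deg_leM.
Qed.

Lemma regular_rderiv_eq0 (f S : F) :
  deg_le 0 f -> rderiv f = f * S -> dominates_t S -> f = 0.
Proof.
move=> hf e hS; apply: (deg_le_eq0 (m := 0)).
apply: (int_descent (P := fun k => deg_le k f) hf) => m hm.
apply: deg_le_regular_step (deg_le0 _ _) hS; rewrite ?mul0r ?addr0 //.
exact: deg_le0.
Qed.

Lemma rderivB_A4 (f g A a b c e a' b' c' e' : F) :
  rderiv f = f * (a - b + c - e) + A -> rderiv g = g * (a' - b' + c' - e') + A ->
  rderiv (f - g) = (f - g) * (a - b + c - e)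
                   + g * ((a - a') - (b - b') + (c - c') - (e - e')).
Proof. by move=> ef eg; rewrite rderivB ef eg; ring. Qed.

End RationalFunctions.

Lemma sh0 (i : 'I_5) : sh i 0 = i.
Proof. by apply: val_inj; rewrite /= addn0 modn_small. Qed.

Lemma shD (i : 'I_5) (k l : nat) : sh (sh i k) l = sh i ((k + l) %% 5).
Proof. by apply: val_inj; rewrite /= modnDml modnDmr addnA. Qed.

Lemma sh_inj (i : 'I_5) : injective (fun k : 'I_5 => sh i k).
Proof.
move=> a b /(congr1 val) /= /eqP; rewrite eqn_modDl !modn_small // => /eqP.
exact: val_inj.
Qed.

Lemma sum_sh5 (V : nmodType) (i : 'I_5) (h : 'I_5 -> V) :
  \sum_(j < 5) h j = h (sh i 0) + h (sh i 1) + h (sh i 2) + h (sh i 3) + h (sh i 4).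
Proof. by rewrite (reindex_inj (@sh_inj i)) /= !big_ord_recr big_ord0 /= add0r. Qed.

Lemma eqfun_sh5 (V : zmodType) (i : 'I_5) (u v : 'I_5 -> V) :
  [/\ u (sh i 0) - v (sh i 0) = 0, u (sh i 1) - v (sh i 1) = 0,
      u (sh i 2) - v (sh i 2) = 0, u (sh i 3) - v (sh i 3) = 0
    & u (sh i 4) - v (sh i 4) = 0] -> u =1 v.
Proof.
move=> uv j; have -> : j = sh i ((j + (5 - i)) %% 5).
  apply: val_inj; rewrite /= modnDmr.
  have -> : (i + (j + (5 - i)) = j + 5)%N by have := ltn_ord i; lia.
  by rewrite modnDr modn_small.
apply/subr0_eq; have : ((j + (5 - i)) %% 5 < 5)%N by rewrite ltn_pmod.
by case: uv; case: (_ %% 5)%N => [|[|[|[|[|k]]]]].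
Qed.

Lemma A4_solution_shift (R : realType) (alpha : 'I_5 -> R[i]) (f : 'I_5 -> ratfun R)
    (i : 'I_5) : A4_solution alpha f ->
  [/\ rderiv (f (sh i 0)) = f (sh i 0) * (f (sh i 1) - f (sh i 2) + f (sh i 3) - f (sh i 4))
                            + ((alpha (sh i 0))%:P)%:F,
      rderiv (f (sh i 1)) = f (sh i 1) * (f (sh i 2) - f (sh i 3) + f (sh i 4) - f (sh i 0))
                            + ((alpha (sh i 1))%:P)%:F,
      rderiv (f (sh i 2)) = f (sh i 2) * (f (sh i 3) - f (sh i 4) + f (sh i 0) - f (sh i 1))
                            + ((alpha (sh i 2))%:P)%:F,
      rderiv (f (sh i 3)) = f (sh i 3) * (f (sh i 4) - f (sh i 0) + f (sh i 1) - f (sh i 2))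
                            + ((alpha (sh i 3))%:P)%:F
    & rderiv (f (sh i 4)) = f (sh i 4) * (f (sh i 0) - f (sh i 1) + f (sh i 2) - f (sh i 3))
                            + ((alpha (sh i 4))%:P)%:F]
  /\ f (sh i 0) + f (sh i 1) + f (sh i 2) + f (sh i 3) + f (sh i 4) = 'X%:F.
Proof.
move=> [E S]; split; last by rewrite -S (sum_sh5 i).
by split; rewrite E !shD.
Qed.

Ltac deg_le_lincomb :=
  repeat first [assumption | apply: deg_leD | apply: deg_leN | apply: deg_leMn].

Section A4Cases.
Variables (R : realType) (alpha : 'I_5 -> R[i]) (i : 'I_5) (f g : 'I_5 -> ratfun R).
Hypotheses (Hf : A4_solution alpha f) (Hg : A4_solution alpha g).

Local Notation f0 := (f (sh i 0)).
Local Notation f1 := (f (sh i 1)).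
Local Notation f2 := (f (sh i 2)).
Local Notation f3 := (f (sh i 3)).
Local Notation f4 := (f (sh i 4)).
Local Notation S0 := (f1 - f2 + f3 - f4).
Local Notation S1 := (f2 - f3 + f4 - f0).
Local Notation S2 := (f3 - f4 + f0 - f1).
Local Notation S3 := (f4 - f0 + f1 - f2).
Local Notation S4 := (f0 - f1 + f2 - f3).
Local Notation g0 := (g (sh i 0)).
Local Notation g1 := (g (sh i 1)).
Local Notation g2 := (g (sh i 2)).
Local Notation g3 := (g (sh i 3)).
Local Notation g4 := (g (sh i 4)).
Local Notation d0 := (f0 - g0).
Local Notation d1 := (f1 - g1).
Local Notation d2 := (f2 - g2).
Local Notation d3 := (f3 - g3).
Local Notation d4 := (f4 - g4).
Local Notation D0 := (d1 - d2 + d3 - d4).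
Local Notation D1 := (d2 - d3 + d4 - d0).
Local Notation D2 := (d3 - d4 + d0 - d1).
Local Notation D3 := (d4 - d0 + d1 - d2).

Lemma sum_diff_eq0 : d0 + d1 + d2 + d3 + d4 = 0.
Proof.
have [_ sf] := A4_solution_shift i Hf; have [_ sg] := A4_solution_shift i Hg.
transitivity ((f0 + f1 + f2 + f3 + f4) - (g0 + g1 + g2 + g3 + g4)); first by ring.
by rewrite sf sg subrr.
Qed.

Lemma case1_dominates : case1 i f ->
  [/\ dominates_t S1, dominates_t S2, dominates_t S3 & dominates_t S4].
Proof.
move=> /and5P[_ /deg_le_regular h1 /deg_le_regular h2 /deg_le_regular h3 /deg_le_regular h4].
have [_ sf] := A4_solution_shift i Hf; split.
- exists (-1); first exact/deg_leN/deg_le1.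
  have -> : -1 * S1 - 'X%:F = - (f1 + 2 * f2 + 2 * f4) by rewrite -sf; ring.
  by deg_le_lincomb.
- exists 1; first exact: deg_le1.
  have -> : 1 * S2 - 'X%:F = - (2 * f1 + f2 + 2 * f4) by rewrite -sf; ring.
  by deg_le_lincomb.
- exists (-1); first exact/deg_leN/deg_le1.
  have -> : -1 * S3 - 'X%:F = - (2 * f1 + f3 + 2 * f4) by rewrite -sf; ring.
  by deg_le_lincomb.
- exists 1; first exact: deg_le1.
  have -> : 1 * S4 - 'X%:F = - (2 * f1 + 2 * f3 + f4) by rewrite -sf; ring.
  by deg_le_lincomb.
Qed.

Lemma case1_unique : case1 i f -> case1 i g -> f =1 g.
Proof.
move=> cf; have [dom1 dom2 dom3 dom4] := case1_dominates cf.
move=> /and5P[_ /deg_le_regular rg1 /deg_le_regular rg2 /deg_le_regular rg3 /deg_le_regular rg4].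
have [[_ Ef1 Ef2 Ef3 Ef4] _] := A4_solution_shift i Hf.
have [[_ Eg1 Eg2 Eg3 Eg4] _] := A4_solution_shift i Hg.
apply: (@eqfun_sh5 _ i); apply: deg_le_descent5 => m [h0 h1 h2 h3 h4].
have n1 : deg_le (m - 1) d1.
  by apply: deg_le_regular_step (rderivB_A4 Ef1 Eg1) h1 _ rg1 dom1; deg_le_lincomb.
have n2 : deg_le (m - 1) d2.
  by apply: deg_le_regular_step (rderivB_A4 Ef2 Eg2) h2 _ rg2 dom2; deg_le_lincomb.
have n3 : deg_le (m - 1) d3.
  by apply: deg_le_regular_step (rderivB_A4 Ef3 Eg3) h3 _ rg3 dom3; deg_le_lincomb.
have n4 : deg_le (m - 1) d4.
  by apply: deg_le_regular_step (rderivB_A4 Ef4 Eg4) h4 _ rg4 dom4; deg_le_lincomb.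
have hs : deg_le (m - 1) (d0 + d1 + d2 + d3 + d4) by rewrite sum_diff_eq0; apply: deg_le0.
split=> //; have -> : d0 = (d0 + d1 + d2 + d3 + d4) - d1 - d2 - d3 - d4 by ring.
by deg_le_lincomb.
Qed.

Lemma case1_eq0 : case1 i f ->
  forall k, (1 <= k <= 4)%N -> alpha (sh i k) = 0 -> f (sh i k) = 0.
Proof.
move=> cf; have [dom1 dom2 dom3 dom4] := case1_dominates cf.
move: cf => /and5P[_ /deg_le_regular rf1 /deg_le_regular rf2 /deg_le_regular rf3 /deg_le_regular rf4].
have [[_ Ef1 Ef2 Ef3 Ef4] _] := A4_solution_shift i Hf.
case=> [|[|[|[|[|k]]]]] //= _ a0.
- by apply: regular_rderiv_eq0 rf1 _ dom1; rewrite Ef1 a0 tofrac0 addr0.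
- by apply: regular_rderiv_eq0 rf2 _ dom2; rewrite Ef2 a0 tofrac0 addr0.
- by apply: regular_rderiv_eq0 rf3 _ dom3; rewrite Ef3 a0 tofrac0 addr0.
- by apply: regular_rderiv_eq0 rf4 _ dom4; rewrite Ef4 a0 tofrac0 addr0.
Qed.

Lemma case2_dominates : case2 i f -> dominates_t S2 /\ dominates_t S4.
Proof.
have [[Ef0 Ef1 _ Ef3 _] sf] := A4_solution_shift i Hf.
move=> /and5P[pf0 pf1 pf3 /deg_le_regular h2 _]; rewrite -(sh0 i) in pf0.
have h0 : deg_le 0 S0 by apply: deg_leW (pole_deg_le_coef pf0 Ef0 (deg_leC _)).
have h1 : deg_le 0 S1 by apply: deg_leW (pole_deg_le_coef pf1 Ef1 (deg_leC _)).
have h3 : deg_le 0 S3 by apply: deg_leW (pole_deg_le_coef pf3 Ef3 (deg_leC _)).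
split.
- exists (-1); first exact/deg_leN/deg_le1.
  have -> : -1 * S2 - 'X%:F = 2 * S0 + 4 * S1 - 2 * S3 - 5 * f2 by rewrite -sf; ring.
  by deg_le_lincomb.
- exists 1; first exact: deg_le1.
  have -> : 1 * S4 - 'X%:F = S0 + 3 * S1 - 3 * S3 - 5 * f2 by rewrite -sf; ring.
  by deg_le_lincomb.
Qed.

Lemma case2_unique : case2 i f -> case2 i g -> f =1 g.
Proof.
move=> cf; have [dom2 dom4] := case2_dominates cf.
move: cf => /and5P[pf0 pf1 pf3 _ _]; rewrite -(sh0 i) in pf0.
move=> /and5P[pg0 pg1 pg3 /deg_le_regular rg2 /deg_le_regular rg4]; rewrite -(sh0 i) in pg0.
have [[Ef0 Ef1 Ef2 Ef3 Ef4] _] := A4_solution_shift i Hf.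
have [[Eg0 Eg1 Eg2 Eg3 Eg4] _] := A4_solution_shift i Hg.
have hS0 := pole_deg_le_coef pf0 Ef0 (deg_leC _).
have hS1 := pole_deg_le_coef pf1 Ef1 (deg_leC _).
have hS3 := pole_deg_le_coef pf3 Ef3 (deg_leC _).
apply: (@eqfun_sh5 _ i); apply: deg_le_descent5 => m [h0 h1 h2 h3 h4].
have n2 : deg_le (m - 1) d2.
  by apply: deg_le_regular_step (rderivB_A4 Ef2 Eg2) h2 _ rg2 dom2; deg_le_lincomb.
have n4 : deg_le (m - 1) d4.
  by apply: deg_le_regular_step (rderivB_A4 Ef4 Eg4) h4 _ rg4 dom4; deg_le_lincomb.
have q0 := deg_le_pole_step (rderivB_A4 Ef0 Eg0) h0 hS0 pg0.
have q1 := deg_le_pole_step (rderivB_A4 Ef1 Eg1) h1 hS1 pg1.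
have q3 := deg_le_pole_step (rderivB_A4 Ef3 Eg3) h3 hS3 pg3.
have hs : deg_le (m - 1) (d0 + d1 + d2 + d3 + d4) by rewrite sum_diff_eq0; apply: deg_le0.
split=> //.
- have -> : d0 = D0 + 2 * D1 - 2 * D3 - 4 * d2 + (d0 + d1 + d2 + d3 + d4) by ring.
  by deg_le_lincomb.
- have -> : d1 = 2 * D0 + 3 * D1 - 2 * D3 - 4 * d2 + (d0 + d1 + d2 + d3 + d4) by ring.
  by deg_le_lincomb.
- have -> : d3 = 3 * D3 + 6 * d2 - 2 * D0 - 4 * D1 - (d0 + d1 + d2 + d3 + d4) by ring.
  by deg_le_lincomb.
Qed.

Lemma case2_eq0 : case2 i f ->
  (alpha (sh i 2) = 0 -> f (sh i 2) = 0) /\ (alpha (sh i 4) = 0 -> f (sh i 4) = 0).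
Proof.
move=> cf; have [dom2 dom4] := case2_dominates cf.
move: cf => /and5P[_ _ _ /deg_le_regular rf2 /deg_le_regular rf4].
have [[_ _ Ef2 _ Ef4] _] := A4_solution_shift i Hf.
split=> a0.
- by apply: regular_rderiv_eq0 rf2 _ dom2; rewrite Ef2 a0 tofrac0 addr0.
- by apply: regular_rderiv_eq0 rf4 _ dom4; rewrite Ef4 a0 tofrac0 addr0.
Qed.

Lemma case3_dominates : case3 i f -> dominates_t S3 /\ dominates_t S4.
Proof.
have [[Ef0 Ef1 Ef2 _ _] sf] := A4_solution_shift i Hf.
move=> /and5P[pf0 pf1 pf2 /deg_le_regular h3 _]; rewrite -(sh0 i) in pf0.
have h0 : deg_le 0 S0 by apply: deg_leW (pole_deg_le_coef pf0 Ef0 (deg_leC _)).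
have h1 : deg_le 0 S1 by apply: deg_leW (pole_deg_le_coef pf1 Ef1 (deg_leC _)).
have h2 : deg_le 0 S2 by apply: deg_leW (pole_deg_le_coef pf2 Ef2 (deg_leC _)).
split.
- exists (-3); first exact/deg_leN/deg_le_nat.
  have -> : -3 * S3 - 'X%:F = 2 * S0 + 4 * S1 + 6 * S2 - 5 * f3 by rewrite -sf; ring.
  by deg_le_lincomb.
- exists 3; first exact: deg_le_nat.
  have -> : 3 * S4 - 'X%:F = S1 + 3 * S2 - S0 - 5 * f3 by rewrite -sf; ring.
  by deg_le_lincomb.
Qed.

Lemma case3_unique : case3 i f -> case3 i g -> f =1 g.
Proof.
move=> cf; have [dom3 dom4] := case3_dominates cf.
move: cf => /and5P[pf0 pf1 pf2 _ _]; rewrite -(sh0 i) in pf0.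
move=> /and5P[pg0 pg1 pg2 /deg_le_regular rg3 /deg_le_regular rg4]; rewrite -(sh0 i) in pg0.
have [[Ef0 Ef1 Ef2 Ef3 Ef4] _] := A4_solution_shift i Hf.
have [[Eg0 Eg1 Eg2 Eg3 Eg4] _] := A4_solution_shift i Hg.
have hS0 := pole_deg_le_coef pf0 Ef0 (deg_leC _).
have hS1 := pole_deg_le_coef pf1 Ef1 (deg_leC _).
have hS2 := pole_deg_le_coef pf2 Ef2 (deg_leC _).
have three0 : 3%:R != 0 :> R[i] by rewrite pnatr_eq0.
apply: (@eqfun_sh5 _ i); apply: deg_le_descent5 => m [h0 h1 h2 h3 h4].
have n3 : deg_le (m - 1) d3.
  by apply: deg_le_regular_step (rderivB_A4 Ef3 Eg3) h3 _ rg3 dom3; deg_le_lincomb.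
have n4 : deg_le (m - 1) d4.
  by apply: deg_le_regular_step (rderivB_A4 Ef4 Eg4) h4 _ rg4 dom4; deg_le_lincomb.
have q0 := deg_le_pole_step (rderivB_A4 Ef0 Eg0) h0 hS0 pg0.
have q1 := deg_le_pole_step (rderivB_A4 Ef1 Eg1) h1 hS1 pg1.
have q2 := deg_le_pole_step (rderivB_A4 Ef2 Eg2) h2 hS2 pg2.
have hs : deg_le (m - 1) (d0 + d1 + d2 + d3 + d4) by rewrite sum_diff_eq0; apply: deg_le0.
split=> //; apply: (deg_le_natmulK three0).
- have -> : 3 * d0 = (d0 + d1 + d2 + d3 + d4) - D0 - 2 * D1 - 2 * d3 by ring.
  by deg_le_lincomb.
- have -> : 3 * d1 = 2 * D0 + D1 - 2 * d3 + (d0 + d1 + d2 + d3 + d4) by ring.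
  by deg_le_lincomb.
- have -> : 3 * d2 = 2 * D0 + 4 * D1 + 3 * D2 - 2 * d3 + (d0 + d1 + d2 + d3 + d4) by ring.
  by deg_le_lincomb.
Qed.

Lemma case3_eq0 : case3 i f ->
  (alpha (sh i 3) = 0 -> f (sh i 3) = 0) /\ (alpha (sh i 4) = 0 -> f (sh i 4) = 0).
Proof.
move=> cf; have [dom3 dom4] := case3_dominates cf.
move: cf => /and5P[_ _ _ /deg_le_regular rf3 /deg_le_regular rf4].
have [[_ _ _ Ef3 Ef4] _] := A4_solution_shift i Hf.
split=> a0.
- by apply: regular_rderiv_eq0 rf3 _ dom3; rewrite Ef3 a0 tofrac0 addr0.
- by apply: regular_rderiv_eq0 rf4 _ dom4; rewrite Ef4 a0 tofrac0 addr0.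
Qed.

Lemma case4_unique : case4 f -> case4 g -> f =1 g.
Proof.
move=> /forallP pf /forallP pg.
have [[Ef0 Ef1 Ef2 Ef3 _] _] := A4_solution_shift i Hf.
have [[Eg0 Eg1 Eg2 Eg3 _] _] := A4_solution_shift i Hg.
have hS0 := pole_deg_le_coef (pf _) Ef0 (deg_leC _).
have hS1 := pole_deg_le_coef (pf _) Ef1 (deg_leC _).
have hS2 := pole_deg_le_coef (pf _) Ef2 (deg_leC _).
have hS3 := pole_deg_le_coef (pf _) Ef3 (deg_leC _).
have five0 : 5%:R != 0 :> R[i] by rewrite pnatr_eq0.
(* The coefficients below invert the circulant map d |-> (D_k) on sum-zero vectors. *)
apply: (@eqfun_sh5 _ i); apply: deg_le_descent5 => m [h0 h1 h2 h3 h4].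
have q0 := deg_le_pole_step (rderivB_A4 Ef0 Eg0) h0 hS0 (pg _).
have q1 := deg_le_pole_step (rderivB_A4 Ef1 Eg1) h1 hS1 (pg _).
have q2 := deg_le_pole_step (rderivB_A4 Ef2 Eg2) h2 hS2 (pg _).
have q3 := deg_le_pole_step (rderivB_A4 Ef3 Eg3) h3 hS3 (pg _).
have hs : deg_le (m - 1) (d0 + d1 + d2 + d3 + d4) by rewrite sum_diff_eq0; apply: deg_le0.
split; apply: (deg_le_natmulK five0).
- have -> : 5 * d0 = (d0 + d1 + d2 + d3 + d4) - 3 * D0 - 6 * D1 - 4 * D2 - 2 * D3 by ring.
  by deg_le_lincomb.
- have -> : 5 * d1 = 2 * D0 + (d0 + d1 + d2 + d3 + d4) - D1 - 4 * D2 - 2 * D3 by ring.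
  by deg_le_lincomb.
- have -> : 5 * d2 = 2 * D0 + 4 * D1 + D2 + (d0 + d1 + d2 + d3 + d4) - 2 * D3 by ring.
  by deg_le_lincomb.
- have -> : 5 * d3 = 2 * D0 + 4 * D1 + 6 * D2 + 3 * D3 + (d0 + d1 + d2 + d3 + d4) by ring.
  by deg_le_lincomb.
- have -> : 5 * d4 = D2 + 3 * D3 + (d0 + d1 + d2 + d3 + d4) - 3 * D0 - D1 by ring.
  by deg_le_lincomb.
Qed.

End A4Cases.

Unset Implicit Arguments.

Theorem proposition1p3 (R : realType) (alpha : 'I_5 -> R[i]) :
  (* uniqueness of the Laurent series at infinity in each case *)
  (forall (c : nat) (i : 'I_5) (f g : 'I_5 -> ratfun R),
      A4_solution alpha f -> A4_solution alpha g ->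
      in_case c i f -> in_case c i g ->
      forall (j : 'I_5) (n : int), laurent_infty (f j) n = laurent_infty (g j) n)
  /\
  (forall (i : 'I_5) (f : 'I_5 -> ratfun R), A4_solution alpha f ->
      (case1 i f -> forall k : nat, (1 <= k <= 4)%N ->
                    alpha (sh i k) = 0 -> f (sh i k) = 0)
   /\ (case2 i f -> (alpha (sh i 2) = 0 -> f (sh i 2) = 0)
                 /\ (alpha (sh i 4) = 0 -> f (sh i 4) = 0))
   /\ (case3 i f -> (alpha (sh i 3) = 0 -> f (sh i 3) = 0)
                 /\ (alpha (sh i 4) = 0 -> f (sh i 4) = 0))).
Proof.
split=> [c i f g Hf Hg cf cg j n | i f Hf].
  suff -> : f j = g j by [].
  move: cf cg; case: c => [|[|[|[|[|c]]]]] //= cf cg.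
  - exact: case1_unique Hf Hg cf cg j.
  - exact: case2_unique Hf Hg cf cg j.
  - exact: case3_unique Hf Hg cf cg j.
  - exact: (case4_unique i Hf Hg cf cg j).
split; first exact: case1_eq0 Hf.
by split; [exact: case2_eq0 Hf | exact: case3_eq0 Hf].
Qed.
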